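(* Let $A\in\mathbb{R}^{n\times n}$, $B\in\mathbb{R}^n$ with $(A,B)$ controllable, $\mathcal{C}=(B\;AB\;\cdots\;A^{n-1}B)$, and suppose $e_n^T\mathcal{C}^{-1}=C_{n-1}C_{n-2}\cdots C_1$ with $C_k\in\mathbb{R}^{(n-k)\times(n-k+1)}$ for $k=1,\dots,n-1$. Let $\Phi(s)=s^n+p_1s^{n-1}+\dots+p_{n-1}s+p_n$ be a real polynomial. Put $A_1=A$ and $A_k=C_{k-1}C_{k-2}\cdots C_1A^k$ for $k=2,\dots,n$. Define $$K_0=p_nI_n,\qquad K_k=C_k\,(A_k\,p_{n-k}+K_{k-1})\quad(k=1,\dots,n-1),\qquad K=A_n+K_{n-1}.$$ Then $K=e_n^T\mathcal{C}^{-1}\Phi(A)$ and $\det(sI-A+BK)=\Phi(s)$.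
   Context: $e_n$ is the $n$-th canonical basis vector; $K_k$ is an $(n-k)\times n$ matrix and $K$ a row vector. *)

From HB Require Import structures.
From mathcomp Require Import all_boot all_order all_algebra.
Set Implicit Arguments. Unset Strict Implicit. Unset Printing Implicit Defensive.
Import Order.TTheory GRing.Theory Num.Theory.
Local Open Scope ring_scope.

Section Defs.
Variable R : realFieldType.

Definition ctrb (n : nat) (A : 'M[R]_n) (B : 'cV[R]_n) : 'M[R]_n :=
  \matrix_(i < n, j < n) (A ^+ j *m B) i 0.

Definition Phi (n : nat) (p : nat -> R) : {poly R} :=
  'X^n + \sum_(1 <= i < n.+1) (p i)%:P * 'X^(n - i)%N.

(* C k : the matrix C_k of size (n-k) x (n-k+1), for 1 <= k <= n-1 *)
Fixpoint prodC (n : nat) (C : forall k : nat, 'M[R]_(n - k, n - k.-1)) (k : nat)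
  : 'M[R]_(n - k, n) :=
  match k with
  | 0 => castmx (esym (subn0 n), erefl n) (1%:M : 'M[R]_n)
  | k'.+1 => C k'.+1 *m prodC C k'
  end.

Definition Amat (n : nat) (A : 'M[R]_n) (C : forall k : nat, 'M[R]_(n - k, n - k.-1))
  (k : nat) : 'M[R]_(n - k.-1, n) := prodC C k.-1 *m A ^+ k.

Fixpoint Kmat (n : nat) (A : 'M[R]_n) (C : forall k : nat, 'M[R]_(n - k, n - k.-1))
  (p : nat -> R) (k : nat) : 'M[R]_(n - k, n) :=
  match k with
  | 0 => castmx (esym (subn0 n), erefl n) ((p n)%:M : 'M[R]_n)
  | k'.+1 => C k'.+1 *m (p (n - k'.+1)%N *: Amat A C k'.+1 + Kmat A C p k')
  end.

Definition Kfinal (m : nat) (A : 'M[R]_m.+1)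
  (C : forall k : nat, 'M[R]_(m.+1 - k, m.+1 - k.-1)) (p : nat -> R) : 'rV[R]_m.+1 :=
  castmx (subSnn m, erefl m.+1) (Amat A C m.+1 + Kmat A C p m).

End Defs.

(* Let w be the last row of the inverse of the controllability matrix, so
   that w A^j B = [j = n-1] for j < n.  Unfolding the recursion for K_k
   gives K_k = C_k ... C_1 (p_n + p_(n-1) A + ... + p_(n-k) A^k), hence
   K = w Phi(A): this is Ackermann's formula.  For the closed loop matrix
   F = A - B K the same duality gives w F^j = w A^j for j < n and
   w F^n = w A^n - K, so w chi(F) = w chi(A) - K for every monic chi of
   degree n.  Taking chi the characteristic polynomial of F, Cayley-Hamilton
   yields w chi(A) = K = w Phi(A).  Finally the rows w, w A, ..., w A^(n-1)
   are linearly independent (again by duality), so chi = Phi. *)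

From HB Require Import structures.
From mathcomp Require Import all_boot all_order all_algebra.
Import Order.TTheory GRing.Theory Num.Theory.
Set Implicit Arguments.
Unset Strict Implicit.
Local Open Scope ring_scope.

Lemma castmx_mulmx (R : pzSemiRingType) m1 m2 n p (e : m1 = m2)
    (A : 'M[R]_(m1, n)) (B : 'M[R]_(n, p)) :
  castmx (e, erefl n) A *m B = castmx (e, erefl p) (A *m B).
Proof. by case: m2 / e; rewrite !castmx_id. Qed.

Lemma horner_mx_poly (R : comNzSemiRingType) n (A : 'M[R]_n.+1) N (E : nat -> R) :
  horner_mx A (\poly_(i < N) E i) = \sum_(i < N) E i *: A ^+ i.
Proof.
rewrite poly_def rmorph_sum; apply: eq_bigr => i _.
by rewrite -[LHS]/(horner_mx A _) horner_mxZ /= rmorphXn /= horner_mx_X.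
Qed.

Lemma horner_mx_coef (R : comNzSemiRingType) n (A : 'M[R]_n.+1) (q : {poly R}) N :
  (size q <= N)%N -> horner_mx A q = \sum_(i < N) q`_i *: A ^+ i.
Proof.
move=> szq; rewrite -horner_mx_poly; congr (horner_mx A); apply/polyP => j.
rewrite coef_poly; case: ltnP => // leNj.
by rewrite nth_default // (leq_trans szq).
Qed.

Lemma size_monicB (R : nzRingType) (p q : {poly R}) :
  p \is monic -> q \is monic -> size p = size q -> (size (p - q)%R < size p)%N.
Proof.
move=> mon_p mon_q eq_pq.
have sz_p : (0 < size p)%N by rewrite size_poly_gt0 monic_neq0.
rewrite -(prednK sz_p) ltnS; apply/leq_sizeP => j le_pj; rewrite coefB.
case: ltngtP le_pj => // [lt_pj _ | <- _].
  by rewrite !nth_default ?subrr // -?eq_pq ?(leq_trans _ lt_pj) ?leqSpred.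
by rewrite {2}eq_pq -!/(lead_coef _) (monicP mon_p) (monicP mon_q) subrr.
Qed.

Section KrylovDual.

Variables (R : comNzRingType) (m : nat) (A : 'M[R]_m.+1) (B : 'cV[R]_m.+1).
Variable w : 'rV[R]_m.+1.
Hypothesis w_dual : forall j, (j <= m)%N -> w *m (A ^+ j *m B) = (j == m)%:R%:M.

Lemma dual_feedback_exp (K : 'rV[R]_m.+1) j : (j <= m.+1)%N ->
  w *m (A - B *m K) ^+ j = w *m A ^+ j - (j == m.+1)%:R *: K.
Proof.
elim: j => [|j IHj] le_jm; first by rewrite !expr0 scale0r subr0.
rewrite !exprSr !mulmxA IHj 1?ltnW // (ltn_eqF le_jm) scale0r subr0.
rewrite mulmxDr mulmxN !mulmxA -[w *m A ^+ j *m B]mulmxA w_dual //.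
by rewrite mul_scalar_mx eqSS.
Qed.

Lemma dual_horner_feedback (K : 'rV[R]_m.+1) (q : {poly R}) :
  (size q <= m.+2)%N ->
  w *m horner_mx (A - B *m K) q = w *m horner_mx A q - q`_m.+1 *: K.
Proof.
move=> szq; rewrite (horner_mx_coef (A - B *m K) szq) (horner_mx_coef A szq).
rewrite !mulmx_sumr [in LHS]big_ord_recr [in RHS]big_ord_recr /=.
rewrite -!scalemxAr dual_feedback_exp // eqxx scale1r scalerBr addrA.
congr (_ + _ - _); apply: eq_bigr => i _.
by rewrite -!scalemxAr dual_feedback_exp 1?ltnW // ltn_eqF // scale0r subr0.
Qed.

Lemma dual_scale_exp (c : R) i k : (i + k <= m)%N ->
  w *m (c *: A ^+ i) *m (A ^+ k *m B) = (c * (i + k == m)%N%:R)%:M.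
Proof.
move=> le_ikm; rewrite -scalemxAr -scalemxAl -mulmxA.
have -> : A ^+ i *m (A ^+ k *m B) = A ^+ (i + k) *m B by rewrite exprD mulmxA.
by rewrite w_dual // scale_scalar_mx.
Qed.

Lemma dual_horner_lead (r : {poly R}) d : size r = d.+1 -> (d <= m)%N ->
  w *m horner_mx A r *m (A ^+ (m - d) *m B) = (lead_coef r)%:M.
Proof.
move=> szr le_dm; rewrite (horner_mx_coef A (eq_leq szr)) mulmx_sumr mulmx_suml.
rewrite big_ord_recr /= dual_scale_exp subnKC // eqxx mulr1 /lead_coef szr.
rewrite big1 ?add0r // => i _; rewrite dual_scale_exp ?ltn_eqF ?mulr0 ?raddf0 //.
  by rewrite -{2}(subnKC le_dm) ltn_add2r.
by rewrite -{2}(subnKC le_dm) leq_add2r ltnW.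
Qed.

Lemma dual_horner_eq0 (r : {poly R}) :
  (size r <= m.+1)%N -> w *m horner_mx A r = 0 -> r = 0.
Proof.
move=> szr wr0; have [// | nz_r] := eqVneq r 0.
have sz_r : size r = (size r).-1.+1 by rewrite prednK // size_poly_gt0.
have := dual_horner_lead sz_r; rewrite wr0 !mul0mx -ltnS -sz_r => /(_ szr).
move=> /(congr1 (fun M : 'M[R]_1 => M 0 0)); rewrite !mxE eqxx mulr1n.
by move=> /esym /eqP; rewrite lead_coef_eq0 (negPf nz_r).
Qed.

Lemma char_poly_dual_feedback (q : {poly R}) :
  q \is monic -> size q = m.+2 ->
  char_poly (A - B *m (w *m horner_mx A q)) = q.
Proof.
move=> mon_q szq; set K := w *m horner_mx A q; set chi := char_poly _.
have sz_chi : size chi = m.+2 by rewrite size_char_poly.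
have chi_m : chi`_m.+1 = 1.
  by have := monicP (char_poly_monic (A - B *m K)); rewrite /lead_coef sz_chi.
have wchi : w *m horner_mx A chi = K.
  apply/eqP; rewrite -subr_eq0 -[K]scale1r -chi_m -dual_horner_feedback ?sz_chi //.
  by rewrite Cayley_Hamilton mulmx0.
apply/eqP; rewrite -subr_eq0; apply/eqP/dual_horner_eq0.
  by rewrite -ltnS -sz_chi size_monicB ?char_poly_monic ?sz_chi.
by rewrite rmorphB mulmxBr wchi subrr.
Qed.

End KrylovDual.

Lemma ctrb_dual (R : realFieldType) m (A : 'M[R]_m.+1) (B : 'cV[R]_m.+1) :
  ctrb A B \in unitmx -> forall j, (j <= m)%N ->
  row ord_max (invmx (ctrb A B)) *m (A ^+ j *m B) = (j == m)%:R%:M.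
Proof.
move=> ctrb_unit j le_jm; apply/matrixP => i k; rewrite !ord1 !mxE eqxx mulr1n.
pose jm : 'I_m.+1 := Ordinal (le_jm : (j < m.+1)%N).
have := congr1 (fun M : 'M[R]_m.+1 => M ord_max jm) (mulVmx ctrb_unit).
rewrite !mxE eq_sym -(inj_eq val_inj) /= => <-.
by apply: eq_bigr => l _; rewrite !mxE.
Qed.

Lemma Phi_lower (R : realFieldType) n (p : nat -> R) :
  Phi n p = 'X^n + \poly_(i < n) p (n - i)%N.
Proof.
rewrite /Phi poly_def big_add1 big_nat_rev big_mkord; congr (_ + _).
by apply: eq_bigr => i _; rewrite /= add0n mul_polyC subnSK // subKn // ltnW.
Qed.

Lemma size_Phi (R : realFieldType) n (p : nat -> R) : size (Phi n p) = n.+1.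
Proof. by rewrite Phi_lower size_polyDl size_polyXn // ltnS size_poly. Qed.

Lemma Phi_monic (R : realFieldType) n (p : nat -> R) : Phi n p \is monic.
Proof.
by rewrite monicE Phi_lower lead_coefDl ?lead_coefXn // size_polyXn ltnS size_poly.
Qed.

Lemma Kmat_eq (R : realFieldType) n (A : 'M[R]_n)
    (C : forall k : nat, 'M[R]_(n - k, n - k.-1)) (p : nat -> R) k :
  Kmat A C p k = prodC C k *m \sum_(j < k.+1) p (n - j)%N *: A ^+ j.
Proof.
elim: k => [|k IHk] /=.
  by rewrite castmx_mulmx big_ord1 expr0 mul1mx scalemx1 [in p (_ - _)%N]subn0.
by rewrite IHk /Amat /= scalemxAr -mulmxDr mulmxA [in RHS]big_ord_recr /= addrC.
Qed.

Lemma Kfinal_eq (R : realFieldType) m (A : 'M[R]_m.+1)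
    (C : forall k : nat, 'M[R]_(m.+1 - k, m.+1 - k.-1)) (p : nat -> R) :
  Kfinal A C p = castmx (subSnn m, erefl m.+1) (prodC C m) *m horner_mx A (Phi m.+1 p).
Proof.
rewrite /Kfinal Kmat_eq /Amat -mulmxDr -castmx_mulmx Phi_lower rmorphD /=.
by rewrite rmorphXn /= horner_mx_X horner_mx_poly.
Qed.

Theorem mainTheorem4 (R : realFieldType) (m : nat)
  (A : 'M[R]_m.+1) (B : 'cV[R]_m.+1)
  (C : forall k : nat, 'M[R]_(m.+1 - k, m.+1 - k.-1)) (p : nat -> R) :
  ctrb A B \in unitmx ->
  row ord_max (invmx (ctrb A B)) = castmx (subSnn m, erefl m.+1) (prodC C m) ->
  Kfinal A C p = row ord_max (invmx (ctrb A B)) *m horner_mx A (Phi m.+1 p) /\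
  char_poly (A - B *m Kfinal A C p) = Phi m.+1 p.
Proof.
move=> ctrb_unit w_prodC.
have ackermann : Kfinal A C p = row ord_max (invmx (ctrb A B)) *m horner_mx A (Phi m.+1 p).
  by rewrite Kfinal_eq w_prodC.
split=> //; rewrite ackermann char_poly_dual_feedback ?Phi_monic ?size_Phi //.
exact: ctrb_dual.
Qed.
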